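(* Every connected threshold graph is detour covered, and every $2$-connected threshold graph is cummerbund covered.
   Context: All graphs are finite and simple. A graph $G$ is a threshold graph if there exist a function $f:V(G)\to\mathbb{R}_{\ge 0}$ and a real number $t\ge 0$ such that for any two distinct vertices $u,v$, $u$ and $v$ are adjacent if and only if $f(u)+f(v)>t$. A detour (resp. cummerbund) of a graph is a longest path (resp. longest cycle) in it. A graph is detour covered (resp. cummerbund covered) if every vertex lies in some detour (resp. cummerbund). *)

From Stdlib Require Import Reals.
From mathcomp Require Import all_boot.

Set Implicit Arguments.
Unset Strict Implicit.
Unset Printing Implicit Defensive.

Section Graphs.
Variable T : finType.
Variable e : rel T.

Definition simple_graph : Prop := irreflexive e /\ symmetric e.

Definition threshold_graph : Prop :=
  exists (f : T -> R) (t : R),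
    (forall v, Rle (IZR 0) (f v)) /\ Rle (IZR 0) t /\
    forall u v : T, u <> v -> (e u v <-> Rlt t (Rplus (f u) (f v))).

(* A path: non-empty sequence of pairwise distinct vertices, consecutive ones adjacent.
   Its length is (size p).-1, so comparing sizes compares lengths. *)
Definition gpath (p : seq T) : bool :=
  if p is x :: q then path e x q && uniq p else false.

Definition gcycle (c : seq T) : bool :=
  [&& 3 <= size c, uniq c & cycle e c].

Definition detour (p : seq T) : Prop :=
  gpath p /\ forall q, gpath q -> size q <= size p.
Definition cummerbund (c : seq T) : Prop :=
  gcycle c /\ forall d, gcycle d -> size d <= size c.

Definition detour_covered : Prop :=
  forall v : T, exists p, detour p /\ v \in p.
Definition cummerbund_covered : Prop :=
  forall v : T, exists c, cummerbund c /\ v \in c.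

Definition connected_graph : Prop :=
  0 < #|T| /\ forall u v : T, connect e u v.

Definition del_vertex (x : T) : rel T :=
  [rel a b | [&& e a b, a != x & b != x]].

Definition two_connected : Prop :=
  [/\ 3 <= #|T|, connected_graph &
      forall x u v : T, u != x -> v != x -> connect (del_vertex x) u v].

End Graphs.

From Stdlib Require Import Reals Lra Classical.
From mathcomp Require Import all_boot zify.

Set Implicit Arguments.
Unset Strict Implicit.
Unset Printing Implicit Defensive.

(* Say that v dominates w when every neighbour of w other than v is a
   neighbour of v; in a threshold graph this preorder is total (compare
   weights).  Let P be a longest path (or cycle) avoiding v.  If v dominates
   some w on P, putting v in place of w gives a longest path (cycle) through v.
   Otherwise every vertex of P dominates v, so every neighbour y of v is
   adjacent to all of P.  Deleting y (and, for cycles, a second neighbour y')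
   from P leaves at most two paths, and totality lets us rejoin two disjoint
   paths at the cost of a single vertex; putting v, y (and y') back yields a
   path (cycle) through v that is at least as long as P. *)

Lemma exists_longest (T : finType) (Q : seq T -> Prop) (s0 : seq T) :
  Q s0 -> (forall s, Q s -> uniq s) ->
  exists2 s, Q s & forall s', Q s' -> size s' <= size s.
Proof.
move=> Qs0 Q_uniq.
have bounded s : Q s -> size s <= #|T|.
  by move/Q_uniq/card_uniqP <-; apply: max_card.
have [k] := ubnP (#|T| - size s0).
elim: k s0 Qs0 => // k IHk s Qs lt_k.
have [[s' Qs' lt_ss'] | no_longer] := classic (exists2 s', Q s' & size s < size s').
  by apply: (IHk s' Qs'); have := bounded s' Qs'; lia.
exists s => // s' Qs'; rewrite leqNgt; apply/negP => lt_ss'.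
by apply: no_longer; exists s'.
Qed.

Lemma connect_step (T : finType) (r : rel T) u v :
  connect r u v -> u != v -> exists y, r u y.
Proof.
case/connectP => [[|y p]] /= => [_ -> | /andP[r_uy _] _ _]; last by exists y.
by rewrite eqxx.
Qed.

Lemma path_of_all (T : Type) (r : rel T) x s :
  sorted r s -> all (r x) s -> path r x s.
Proof. by case: s => //= y s -> /andP[->]. Qed.

Lemma path_rcons_of_all (T : Type) (r : rel T) x s z :
  sorted r s -> all (r x) s -> all (r^~ z) s -> (s = [::] -> r x z) ->
  path r x (rcons s z).
Proof.
case/lastP: s => [_ _ _ /(_ erefl) /= -> // | s w s_sorted rx_all rz_all _].
rewrite rcons_path last_rcons path_of_all //.
by move: rz_all; rewrite all_rcons => /andP[].
Qed.

Section Domination.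
Variables (T : finType) (e : rel T).
Hypotheses (e_irr : irreflexive e) (e_sym : symmetric e).

Definition dominates (v w : T) : Prop := forall x, e w x -> x != v -> e v x.

Lemma edge_neq x y : e x y -> x != y.
Proof. by apply: contraTneq => ->; rewrite e_irr. Qed.

Lemma gpathE p : gpath e p = [&& p != [::], sorted e p & uniq p].
Proof. by case: p. Qed.

Lemma gpath_uniq p : gpath e p -> uniq p.
Proof. by rewrite gpathE => /and3P[]. Qed.

Lemma gcycle_uniq c : gcycle e c -> uniq c.
Proof. by case/and3P. Qed.

Lemma sorted_rev_cat a A b B :
  sorted e (a :: A) -> sorted e (b :: B) -> e a b ->
  sorted e (rev (a :: A) ++ b :: B).
Proof.
move=> sA sB eab; rewrite rev_cons cat_rcons sorted_cat_cons -rev_cons.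
by rewrite rev_sorted (eq_sorted (e' := e)) ?sA /= ?eab // => x y; apply: e_sym.
Qed.

Definition swap_vertex (w v x : T) : T := if x == w then v else x.

Lemma swap_edge (s : seq T) w v : v \notin s -> dominates v w ->
  {in s &, {homo swap_vertex w v : x y / e x y}}.
Proof.
move=> vs dom x y xs ys exy; rewrite /swap_vertex.
have yv : y != v by apply: contraNneq vs => <-.
have xv : x != v by apply: contraNneq vs => <-.
case: (x =P w) => [xw|_]; case: (y =P w) => [yw|_] //; subst.
- by rewrite e_irr in exy.
- exact: dom.
- by rewrite e_sym; apply: dom; rewrite // e_sym.
Qed.

Lemma swap_inj (s : seq T) w v : v \notin s -> {in s &, injective (swap_vertex w v)}.
Proof.
move=> vs x y xs ys; rewrite /swap_vertex.
case: (x =P w) => [->|_]; case: (y =P w) => [->|_] // vy; subst.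
- by rewrite ys in vs.
- by rewrite xs in vs.
Qed.

Lemma mem_swap (s : seq T) w v : w \in s -> v \in map (swap_vertex w v) s.
Proof. by move=> ws; apply/mapP; exists w; rewrite // /swap_vertex eqxx. Qed.

Lemma gpath_swap (p : seq T) w v : v \notin p -> dominates v w ->
  gpath e p -> gpath e (map (swap_vertex w v) p).
Proof.
move=> vp dom; rewrite !gpathE -!size_eq0 size_map.
rewrite (map_inj_in_uniq (swap_inj (w := w) vp)) => /and3P[-> sp ->].
by rewrite (homo_sorted_in (swap_edge vp dom) (allss p) sp).
Qed.

Lemma gcycle_swap (c : seq T) w v : v \notin c -> dominates v w ->
  gcycle e c -> gcycle e (map (swap_vertex w v) c).
Proof.
move=> vc dom /and3P[size_c uc cc]; apply/and3P; split.
- by rewrite size_map.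
- by rewrite (map_inj_in_uniq (swap_inj (w := w) vc)).
- exact: homo_cycle_in (swap_edge vc dom) (allss c) cc.
Qed.

Lemma cycle_remove_vertex (c : seq T) y : cycle e c -> uniq c ->
  exists r, [/\ sorted e r, uniq r, {subset r <= c}, y \notin r
              & size c <= size r + (y \in c)].
Proof.
move=> cc uc; have [yc | ync] := boolP (y \in c); last first.
  exists c; split; rewrite ?addn0 //.
  by move: cc; rewrite (cycle_path y); apply: path_sorted.
case/rot_to: yc => i r rot_c.
have /andP[/= cr ur] : cycle e (y :: r) && uniq (y :: r).
  by rewrite -rot_c rot_cycle rot_uniq cc.
move: cr ur; rewrite rcons_path => /andP[/path_sorted sr _] /andP[yr ur].
exists r; split=> //; last by rewrite -(size_rot i) rot_c addn1.
by move=> x xr; rewrite -(mem_rot i) rot_c inE xr orbT.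
Qed.

Lemma two_connected_neighbour : two_connected e ->
  forall v x, exists2 y, e v y & y != x.
Proof.
case=> card3 [_ conn] conn_del v x.
have /card_gt0P[u] : 0 < #|~: [set v; x]|.
  by have := cardsC [set v; x]; rewrite cards2; move: card3; case: (v != x) => /=; lia.
rewrite !inE negb_or eq_sym => /andP[vu ux].
have [vx | vx] := eqVneq v x.
  have [y evy] := connect_step (conn v u) vu.
  by exists y; rewrite // -vx eq_sym edge_neq.
have [y /and3P[evy _ yx]] := connect_step (conn_del x v u vx ux) vu.
by exists y.
Qed.

Lemma two_connected_triangle m : two_connected e ->
  (forall w, dominates m w) -> exists c, gcycle e c.
Proof.
move=> conn2 dom_m.
have [y emy _] := two_connected_neighbour conn2 m m.
have [w eyw wm] := two_connected_neighbour conn2 y m.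
have emw : e m w by apply: dom_m eyw wm.
exists [:: m; y; w]; apply/and3P; split => //=.
- by rewrite !inE negb_or !edge_neq.
- by rewrite emy eyw e_sym emw.
Qed.

Section TotalDomination.
Hypothesis dominates_total : forall v w, dominates v w \/ dominates w v.

Lemma cross_edge a b c d : e a b -> e c d -> a != d -> b != c -> e a d \/ e b c.
Proof.
move=> eab ecd ad bc; case: (dominates_total b d) => [dom_bd | dom_db].
- by right; apply: dom_bd; rewrite 1?e_sym 1?eq_sym.
- by left; rewrite e_sym; apply: dom_db; rewrite 1?e_sym.
Qed.

Lemma merge_paths X Z : sorted e X -> sorted e Z -> uniq (X ++ Z) ->
  exists W, [/\ sorted e W, uniq W, {subset W <= X ++ Z}
              & size X + size Z <= (size W).+1].
Proof.
move=> sX sZ uXZ.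
have [uX uZ] : uniq X /\ uniq Z by move: uXZ; rewrite cat_uniq => /and3P[-> _ ->].
have [small_X | big_X] := leqP (size X) 1.
  by exists Z; split=> // [x xZ|]; rewrite ?mem_cat ?xZ ?orbT //; lia.
have [small_Z | big_Z] := leqP (size Z) 1.
  by exists X; split=> // [x xX|]; rewrite ?mem_cat ?xX //; lia.
have disjoint x z : x \in X -> z \in Z -> x != z.
  move: uXZ; rewrite cat_uniq => /and3P[_ /hasPn noXZ _] xX zZ.
  by apply: contraNneq (noXZ z zZ) => <-.
have glue A B : subseq A X -> subseq B Z -> sorted e (rev A ++ B) ->
    size X + size Z <= (size A + size B).+1 -> exists W,
    [/\ sorted e W, uniq W, {subset W <= X ++ Z} & size X + size Z <= (size W).+1].
  move=> AX BZ sAB size_AB; have ABXZ := cat_subseq AX BZ.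
  exists (rev A ++ B); split; rewrite ?size_cat ?size_rev //.
  - have rev_perm : perm_eq (rev A ++ B) (A ++ B) by rewrite perm_cat2r perm_rev.
    by rewrite (perm_uniq rev_perm) (subseq_uniq ABXZ).
  - by move=> x; rewrite mem_cat mem_rev -mem_cat; apply: (mem_subseq ABXZ).
case: X sX big_X glue disjoint uX uXZ => [|p1 [|p2 X]] // sX _ glue disjoint _ _.
case: Z sZ big_Z glue disjoint uZ => [|q1 [|q2 Z]] // sZ _ glue disjoint _.
have /andP[ep12 sX'] := sX; have /andP[eq12 sZ'] := sZ.
have p1q2 : p1 != q2 by apply: disjoint; rewrite !inE eqxx ?orbT.
have p2q1 : p2 != q1 by apply: disjoint; rewrite !inE eqxx ?orbT.
have [ep1q2 | ep2q1] := cross_edge ep12 eq12 p1q2 p2q1.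
- apply: (glue _ _ (subseq_refl _) (subseq_cons _ _)); last by rewrite /=; lia.
  exact: sorted_rev_cat.
- apply: (glue _ _ (subseq_cons _ _) (subseq_refl _)); last by rewrite /=; lia.
  exact: sorted_rev_cat.
Qed.

Lemma path_remove_vertex (p : seq T) y : sorted e p -> uniq p ->
  exists W, [/\ sorted e W, uniq W, {subset W <= p}, y \notin W
              & size p <= (size W).+2].
Proof.
move=> sp up; have [yp | ynp] := boolP (y \in p); last by exists p; split=> //; lia.
case/splitPr: yp sp up => X Z sp up.
have [sX sZ] : sorted e X /\ sorted e Z.
  by have [? /path_sorted] := cat_sorted2 sp.
have /andP[yXZ uXZ] : (y \notin X ++ Z) && uniq (X ++ Z).
  by move: up; rewrite -cat1s uniq_catCA.
have [W [sW uW WXZ size_W]] := merge_paths sX sZ uXZ.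
exists W; split=> //; last by rewrite size_cat /=; lia.
- by move=> x /WXZ; rewrite !mem_cat inE => /orP[] ->; rewrite ?orbT.
- by apply: contra yXZ => /WXZ.
Qed.

Lemma dominates_some_or_dominated_by_all (p : seq T) v :
  (exists2 w, w \in p & dominates v w) \/ (forall x, x \in p -> dominates x v).
Proof.
have [|none] := classic (exists2 w, w \in p & dominates v w); first by left.
right=> x xp; case: (dominates_total v x) => // dom_vx.
by case: none; exists x.
Qed.

Lemma detour_covered_total : connected_graph e -> detour_covered e.
Proof.
case=> _ conn v.
have [P gP longest] := exists_longest (Q := gpath e) (s0 := [:: v]) isT gpath_uniq.
suff [Q [gQ size_Q vQ]] : exists Q, [/\ gpath e Q, size P <= size Q & v \in Q].
  by exists Q; split=> //; split=> // q gq; apply: leq_trans (longest q gq) size_Q.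
have [vP | vNP] := boolP (v \in P); first by exists P.
case: (dominates_some_or_dominated_by_all P v) => [[w wP dom_vw] | dom_v].
  by exists (map (swap_vertex w v) P); rewrite size_map gpath_swap ?mem_swap.
have /and3P[P0 sP uP] : [&& P != [::], sorted e P & uniq P] by rewrite -gpathE.
have [y evy] : exists y, e v y.
  case: P P0 vNP {gP longest sP uP dom_v} => // a P _ vNP.
  by apply: (connect_step (conn v a)); apply: contraNneq vNP => ->; apply: mem_head.
have [W [sW uW WP yW size_W]] := path_remove_vertex y sP uP.
have vW : v \notin W by apply: contra vNP => /WP.
exists [:: v, y & W]; split; [|by rewrite /=; lia|exact: mem_head].
rewrite /= evy uW yW inE negb_or edge_neq // vW path_of_all //.
apply/allP => x xW; rewrite e_sym; apply: (dom_v x (WP x xW)) => //.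
by apply: contraNneq yW => ->.
Qed.

Lemma cummerbund_covered_total : two_connected e ->
  (exists c, gcycle e c) -> cummerbund_covered e.
Proof.
move=> conn2 [c0 gc0] v.
have [C gC longest] := exists_longest gc0 gcycle_uniq.
suff [Q [gQ size_Q vQ]] : exists Q, [/\ gcycle e Q, size C <= size Q & v \in Q].
  by exists Q; split=> //; split=> // d gd; apply: leq_trans (longest d gd) size_Q.
have [vC | vNC] := boolP (v \in C); first by exists C.
case: (dominates_some_or_dominated_by_all C v) => [[w wC dom_vw] | dom_v].
  by exists (map (swap_vertex w v) C); rewrite size_map gcycle_swap ?mem_swap.
have /and3P[size_C uC cC] := gC.
have [y evy _] := two_connected_neighbour conn2 v v.
have [y' evy' y'y] := two_connected_neighbour conn2 v y.
have [R [sR uR RC yR size_R]] := cycle_remove_vertex y cC uC.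
have [W [sW uW WR y'W size_W]] := path_remove_vertex y' sR uR.
have vW : v \notin W by apply: contra vNC => /WR /RC.
have yW : y \notin W by apply: contra yR => /WR.
have adj x : x \in W -> e y x && e x y'.
  move=> xW; have dom_xv := dom_v x (RC x (WR x xW)).
  have neq z : z \notin W -> z != x by apply: contraNneq => ->.
  rewrite e_sym; apply/andP; split; apply: dom_xv; rewrite ?neq //.
have size_CW : size C <= (size W).+2 + (y \in C).
  by apply: leq_trans size_R _; rewrite leq_add2r.
(* [W] can only be empty when [C] is a triangle through [y]. *)
have W_nil : W = [::] -> e y y'.
  have [yC _ | yNC W0] := boolP (y \in C).
    exact: dom_v y yC y' evy' y'y.
  by move: size_CW size_C; rewrite W0 (negbTE yNC) addn0 ltnNge => ->.
exists [:: v, y & rcons W y']; split; last exact: mem_head.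
- apply/and3P; split; first by rewrite /= size_rcons.
  + rewrite /= rcons_uniq uW y'W !inE !mem_rcons !inE !negb_or vW yW.
    by rewrite (edge_neq evy) (edge_neq evy') eq_sym y'y.
  + rewrite /= evy rcons_path last_rcons e_sym evy' andbT.
    apply: path_rcons_of_all => //; apply/allP => x /adj /andP[//].
- apply: leq_trans size_CW _; rewrite /= size_rcons -[(size W).+3]addn1 leq_add2l.
  exact: leq_b1.
Qed.

End TotalDomination.

End Domination.

Section Threshold.
Local Open Scope R_scope.
Variables (T : finType) (e : rel T) (f : T -> R) (t : R).
Hypothesis e_irr : irreflexive e.
Hypothesis e_threshold : forall u v : T, u <> v -> (e u v <-> t < f u + f v).

Lemma threshold_dominates v w : f w <= f v -> dominates e v w.
Proof.
move=> le_wv x ewx xv.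
have wx : w <> x by apply/eqP; apply: edge_neq ewx.
have vx : v <> x by apply/eqP; rewrite eq_sym.
by apply/(e_threshold vx); have := proj1 (e_threshold wx) ewx; lra.
Qed.

Lemma threshold_dominates_total v w : dominates e v w \/ dominates e w v.
Proof.
by case: (Rle_or_lt (f w) (f v)) => ?; [left | right]; apply: threshold_dominates; lra.
Qed.

Lemma threshold_dominating_vertex (x0 : T) : exists m, forall w, dominates e m w.
Proof.
pose heavier x y : bool := Rle_dec (f y) (f x).
have heavierP x y : reflect (f y <= f x) (heavier x y).
  by rewrite /heavier; case: Rle_dec => ?; constructor.
have heavier_refl : reflexive heavier by move=> x; apply/heavierP; lra.
have heavier_trans : transitive heavier.
  by move=> y x z /heavierP ? /heavierP ?; apply/heavierP; lra.
have heavier_total : total heavier.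
  by move=> x y; case: (Rle_or_lt (f x) (f y)) => ?; apply/orP; [right | left];
    apply/heavierP; lra.
case: (extremumP (i0 := x0) (P := xpredT) id heavier_refl heavier_trans heavier_total isT).
by move=> m _ max_m; exists m => w; apply: threshold_dominates; apply/heavierP/max_m.
Qed.

End Threshold.

Theorem corollary13 (T : finType) (e : rel T) :
  simple_graph e -> threshold_graph e ->
  (connected_graph e -> detour_covered e) /\
  (two_connected e -> cummerbund_covered e).
Proof.
move=> [e_irr e_sym] [f [t [_ [_ e_threshold]]]].
have dom_total := threshold_dominates_total e_irr e_threshold.
split=> [|conn2 v]; first exact: detour_covered_total.
have [m dom_m] := threshold_dominating_vertex e_irr e_threshold v.
exact: cummerbund_covered_total (two_connected_triangle e_irr e_sym conn2 dom_m) v.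
Qed.
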